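(* Let $\gamma\ge6/5$ and consider the SIEMS4 coefficients $(a_0,\dots,a_3)=\big(\gamma^3+\tfrac{3\gamma^2}{2}-\tfrac{\gamma}{2}+\tfrac1{12},\ -3\gamma^3-\tfrac{3\gamma^2}{2}+3\gamma-\tfrac5{12},\ 3\gamma^3-\tfrac{3\gamma^2}{2}-\tfrac{3\gamma}{2}+\tfrac{13}{12},\ -\gamma^3+\tfrac{3\gamma^2}{2}-\gamma+\tfrac14\big)$, $(b_0,\dots,b_4)=(\gamma^3,\ 3\gamma^2-3\gamma^3,\ 3\gamma^3-6\gamma^2+3\gamma,\ -\gamma^3+3\gamma^2-3\gamma+1,\ 0)$, $(c_0,\dots,c_3)=(\gamma^3+3\gamma^2,\ -3\gamma^3-6\gamma^2+3\gamma,\ 3\gamma^3+3\gamma^2-3\gamma+1,\ -\gamma^3)$. Then $$\sigma_{\mathrm{F}}=1,\quad\sigma_{\mathrm{E}}=\frac{3(8\gamma^3+12\gamma^2-6\gamma+1)}{4(6\gamma^3-3\gamma+1)},\quad\lambda_{\mathrm{I}}=\frac{3(2\gamma-1)^3}{4(6\gamma^3-3\gamma+1)},$$ so that $\mathfrak{I}_{\mathrm{IE}}=\dfrac{(2\gamma-1)^3}{8\gamma^3+12\gamma^2-6\gamma+1}$.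
   Context: For coefficient vectors $(a_j)_{j=0}^{\mathrm{k}-1}$, $(b_j)_{j=0}^{\mathrm{k}}$, $(c_j)_{j=0}^{\mathrm{k}-1}$ define $a(\theta)=\sum_j a_je^{\imath j\theta}$, $b(\theta)=\sum_j b_je^{\imath j\theta}$, $c(\theta)=\sum_jc_je^{\imath j\theta}$ and $\sigma_{\mathrm{F}}=\max_{\theta\in[0,2\pi)}|1/a(\theta)|$, $\sigma_{\mathrm{E}}=\max_{\theta\in[0,2\pi)}|c(\theta)/a(\theta)|$, $\lambda_{\mathrm{I}}=\min_{\theta\in[0,2\pi)}\Re[b(\theta)/a(\theta)]$, $\mathfrak{I}_{\mathrm{IE}}=\lambda_{\mathrm{I}}/\sigma_{\mathrm{E}}$. Here $\mathrm{k}=4$. *)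

From Stdlib Require Import Reals List.
From Coquelicot Require Import Coquelicot.
Import ListNotations.
Open Scope R_scope.

Definition eit (t : R) : C := (cos t, sin t).

Fixpoint trig_aux (cs : list R) (j : nat) (θ : R) : C :=
  match cs with
  | nil => RtoC 0
  | c :: cs' => Cplus (Cmult (RtoC c) (eit (INR j * θ))) (trig_aux cs' (S j) θ)
  end.

Definition trig (cs : list R) (θ : R) : C := trig_aux cs 0 θ.

Definition in_period (t : R) : Prop := 0 <= t < 2 * PI.

Definition is_max_on_period (f : R -> R) (v : R) : Prop :=
  (exists t, in_period t /\ f t = v) /\ (forall t, in_period t -> f t <= v).

Definition is_min_on_period (f : R -> R) (v : R) : Prop :=
  (exists t, in_period t /\ f t = v) /\ (forall t, in_period t -> v <= f t).

Definition a_nonvanishing (a : list R) : Prop :=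
  forall t, in_period t -> trig a t <> RtoC 0.

Definition sigmaF_is (a : list R) (v : R) : Prop :=
  a_nonvanishing a /\ is_max_on_period (fun t => Cmod (Cinv (trig a t))) v.

Definition sigmaE_is (a c : list R) (v : R) : Prop :=
  a_nonvanishing a /\ is_max_on_period (fun t => Cmod (Cdiv (trig c t) (trig a t))) v.

Definition lambdaI_is (a b : list R) (v : R) : Prop :=
  a_nonvanishing a /\ is_min_on_period (fun t => Re (Cdiv (trig b t) (trig a t))) v.

Definition siems4_a (g : R) : list R :=
  [ g^3 + 3*g^2/2 - g/2 + 1/12;
    -3*g^3 - 3*g^2/2 + 3*g - 5/12;
    3*g^3 - 3*g^2/2 - 3*g/2 + 13/12;
    -g^3 + 3*g^2/2 - g + 1/4 ].

Definition siems4_b (g : R) : list R :=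
  [ g^3; 3*g^2 - 3*g^3; 3*g^3 - 6*g^2 + 3*g; -g^3 + 3*g^2 - 3*g + 1; 0 ].

Definition siems4_c (g : R) : list R :=
  [ g^3 + 3*g^2; -3*g^3 - 6*g^2 + 3*g; 3*g^3 + 3*g^2 - 3*g + 1; -g^3 ].

(* Writing e^{ijθ} = T_j(cos θ) + i sin θ U_{j-1}(cos θ), the quantities |a|², |c|² and
   Re(b conj a) become polynomials in γ and c = cos θ ∈ [-1, 1]. Since a(1) = 1, σ_F is
   attained at θ = 0; σ_E and λ_I are attained at θ = π, where a(-1) = 4/3 (6γ³ - 3γ + 1),
   b(-1) = (2γ - 1)³ and c(-1) = 8γ³ + 12γ² - 6γ + 1. Each of the three polynomial
   inequalities is an equality at its extremal endpoint c = ±1; after dividing out 1 ∓ c,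
   the cofactor has nonnegative Bernstein coefficients on [-1, 1] for γ ≥ 6/5, as a
   Taylor expansion at γ = 6/5 with nonnegative coefficients shows. *)

From Stdlib Require Import Reals List Lra.
From Coquelicot Require Import Coquelicot.
Import ListNotations.
Open Scope R_scope.

(* The Chebyshev pair (T_n c, U_(n-1) c). *)
Fixpoint chebyshev (n : nat) (c : R) : R * R :=
  match n with
  | O => (1, 0)
  | S n => let (T, U) := chebyshev n c in (T * c - (1 - c ^ 2) * U, U * c + T)
  end.

Lemma sin_sq (t : R) : sin t ^ 2 = 1 - cos t ^ 2.
Proof. rewrite <- (sin2_cos2 t). unfold Rsqr. ring. Qed.

Lemma eit_chebyshev (n : nat) (t : R) :
  eit (INR n * t) = (fst (chebyshev n (cos t)), sin t * snd (chebyshev n (cos t))).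
Proof.
  induction n as [|n IH]; unfold eit in *; cbn [chebyshev].
  - rewrite Rmult_0_l, cos_0, sin_0. cbn [fst snd]. f_equal. ring.
  - rewrite S_INR, Rmult_plus_distr_r, Rmult_1_l, cos_plus, sin_plus.
    injection IH as -> ->.
    destruct (chebyshev n (cos t)) as [T U]. cbn [fst snd]. f_equal.
    + rewrite <- (sin_sq t). ring.
    + ring.
Qed.

Fixpoint cheb_re (cs : list R) (j : nat) (c : R) : R :=
  match cs with
  | [] => 0
  | x :: cs' => x * fst (chebyshev j c) + cheb_re cs' (S j) c
  end.

Fixpoint cheb_im (cs : list R) (j : nat) (c : R) : R :=
  match cs with
  | [] => 0
  | x :: cs' => x * snd (chebyshev j c) + cheb_im cs' (S j) c
  end.

Lemma trig_aux_chebyshev (cs : list R) (j : nat) (t : R) :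
  trig_aux cs j t = (cheb_re cs j (cos t), sin t * cheb_im cs j (cos t)).
Proof.
  revert j. induction cs as [|x cs IH]; intros j; simpl.
  - unfold RtoC. f_equal. ring.
  - rewrite eit_chebyshev, IH. unfold Cplus, Cmult, RtoC. simpl. f_equal; ring.
Qed.

Definition cheb_norm2 (cs : list R) (c : R) : R :=
  cheb_re cs 0 c ^ 2 + (1 - c ^ 2) * cheb_im cs 0 c ^ 2.

Definition cheb_dot (u v : list R) (c : R) : R :=
  cheb_re u 0 c * cheb_re v 0 c + (1 - c ^ 2) * (cheb_im u 0 c * cheb_im v 0 c).

Lemma Cmod_trig (cs : list R) (t : R) : Cmod (trig cs t) = sqrt (cheb_norm2 cs (cos t)).
Proof.
  unfold Cmod, trig, cheb_norm2. rewrite trig_aux_chebyshev. cbn [fst snd].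
  rewrite <- sin_sq. f_equal. ring.
Qed.

Lemma trig_neq0 (cs : list R) (t : R) : 0 < cheb_norm2 cs (cos t) -> trig cs t <> 0.
Proof.
  intros Hpos H0. assert (Hmod := Cmod_trig cs t).
  rewrite H0, Cmod_0 in Hmod. assert (Hsqrt := sqrt_lt_R0 _ Hpos). lra.
Qed.

Lemma Re_div_sin_form (x y u v s : R) : u ^ 2 + s ^ 2 * v ^ 2 <> 0 ->
  Re ((x, s * y) / (u, s * v)) = (x * u + s ^ 2 * (y * v)) / (u ^ 2 + s ^ 2 * v ^ 2).
Proof.
  intros Hden. unfold Cdiv, Cinv, Cmult, Re. cbn [fst snd].
  field. contradict Hden. rewrite <- Hden. ring.
Qed.

Lemma Re_div_trig (u v : list R) (t : R) : cheb_norm2 v (cos t) <> 0 ->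
  Re (trig u t / trig v t) = cheb_dot u v (cos t) / cheb_norm2 v (cos t).
Proof.
  unfold trig, cheb_norm2, cheb_dot. rewrite !trig_aux_chebyshev.
  intros Hv. rewrite Re_div_sin_form, sin_sq; [reflexivity | now rewrite sin_sq].
Qed.

Lemma cheb_norm2_m1 (cs : list R) : cheb_norm2 cs (-1) = cheb_re cs 0 (-1) ^ 2.
Proof. unfold cheb_norm2. ring. Qed.

Lemma cheb_dot_m1 (u v : list R) : cheb_dot u v (-1) = cheb_re u 0 (-1) * cheb_re v 0 (-1).
Proof. unfold cheb_dot. ring. Qed.

Lemma Rdiv_le_div_cross (a b c d : R) : 0 < b -> 0 < d -> a * d <= c * b -> a / b <= c / d.
Proof.
  intros Hb Hd H. apply Rmult_le_reg_r with (r := b * d); [nra|].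
  replace (a / b * (b * d)) with (a * d) by (field; lra).
  replace (c / d * (b * d)) with (c * b) by (field; lra). exact H.
Qed.

Lemma is_max_on_period_of_cos (f P : R -> R) (t0 v : R) :
  (forall t, in_period t -> f t = P (cos t)) -> in_period t0 -> P (cos t0) = v ->
  (forall c, -1 <= c <= 1 -> P c <= v) -> is_max_on_period f v.
Proof.
  intros Hf Ht0 Hv Hle. split.
  - exists t0. split; [exact Ht0|]. rewrite Hf; assumption.
  - intros t Ht. rewrite Hf by exact Ht. apply Hle, COS_bound.
Qed.

Lemma is_min_on_period_of_cos (f P : R -> R) (t0 v : R) :
  (forall t, in_period t -> f t = P (cos t)) -> in_period t0 -> P (cos t0) = v ->
  (forall c, -1 <= c <= 1 -> v <= P c) -> is_min_on_period f v.
Proof.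
  intros Hf Ht0 Hv Hge. split.
  - exists t0. split; [exact Ht0|]. rewrite Hf; assumption.
  - intros t Ht. rewrite Hf by exact Ht. apply Hge, COS_bound.
Qed.

Lemma in_period_0 : in_period 0.
Proof. unfold in_period. pose proof PI_RGT_0. lra. Qed.

Lemma in_period_PI : in_period PI.
Proof. unfold in_period. pose proof PI_RGT_0. lra. Qed.

Fixpoint horner (ps : list R) (x : R) : R :=
  match ps with
  | [] => 0
  | p :: ps' => p + x * horner ps' x
  end.

Lemma horner_nonneg (ps : list R) (x : R) :
  List.Forall (Rle 0) ps -> 0 <= x -> 0 <= horner ps x.
Proof.
  intros Hps Hx. induction Hps as [|p ps Hp _ IH]; simpl.
  - lra.
  - apply Rplus_le_le_0_compat; [exact Hp | apply Rmult_le_pos; assumption].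
Qed.

Fixpoint bernstein (ps : list R) (c : R) : R :=
  match ps with
  | [] => 0
  | p :: ps' => p * (1 - c) ^ length ps' + (1 + c) * bernstein ps' c
  end.

Lemma bernstein_nonneg (ps : list R) (c : R) :
  List.Forall (Rle 0) ps -> -1 <= c <= 1 -> 0 <= bernstein ps c.
Proof.
  intros Hps Hc. induction Hps as [|p ps Hp _ IH]; simpl.
  - lra.
  - apply Rplus_le_le_0_compat; apply Rmult_le_pos; try apply pow_le; lra.
Qed.

Lemma bernstein_horner_nonneg (pss : list (list R)) (x c : R) :
  List.Forall (List.Forall (Rle 0)) pss -> 0 <= x -> -1 <= c <= 1 ->
  0 <= bernstein (map (fun ps => horner ps x) pss) c.
Proof.
  intros Hpss Hx Hc. apply bernstein_nonneg; [|exact Hc].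
  apply List.Forall_map. eapply List.Forall_impl; [|exact Hpss].
  intros ps Hps. apply horner_nonneg; assumption.
Qed.

Ltac nonneg_coefficients := repeat first [apply List.Forall_nil | apply List.Forall_cons | lra].

Ltac expand_siems4 :=
  unfold cheb_norm2, cheb_dot, siems4_a, siems4_b, siems4_c;
  cbn [cheb_re cheb_im chebyshev fst snd map horner bernstein length].

(* Bernstein coefficients of the cofactors below, each a polynomial in g - 6/5 (read by
   [horner]) with nonnegative coefficients. The sigmaF cofactor is quadratic in c, but its
   degree-2 Bernstein coefficients change sign near g = 6/5, so it is elevated to degree 3. *)
Definition sigmaF_certificate : list (list R) :=
  [ [14944831/2250000; 370922/9375; 11957/125; 9028/75; 412/5; 144/5; 4];
    [14624381/2250000; 1560413/37500; 51063/500; 9583/75; 427/5; 144/5; 4];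
    [5257/90000; 387/125; 361/50; 37/5; 3];
    [241/1200; 21/20; 3/4] ].

Definition sigmaE_certificate : list (list R) :=
  [ [3616066157/625000; 5083385574/78125; 4774256787/15625; 2512882842/3125;
     825897774/625; 1413744; 24662144/25; 2162592/5; 107712; 11520];
    [1133013303/312500; 796163943/31250; 475225689/6250; 15556404/125;
     3002814/25; 1699272/25; 103584/5; 2592];
    [14426293/25000; 125097/50; 213291/50; 17736/5; 1422; 216] ].

Definition lambdaI_certificate : list (list R) :=
  [ [952469/75000; 404087/2500; 3512/5; 22339/15; 1692; 996; 240];
    [113623/7500; 10516/125; 8673/50; 791/5; 54];
    [571/200; 141/20; 9/2] ].

Lemma siems4_a_norm2_sub1 (g c : R) :
  cheb_norm2 (siems4_a g) c - 1 =
  (1 - c) * bernstein (map (fun ps => horner ps (g - 6/5)) sigmaF_certificate) c.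
Proof. unfold sigmaF_certificate. expand_siems4. field. Qed.

Lemma siems4_a_norm2_ge1 (g c : R) : 6/5 <= g -> -1 <= c <= 1 ->
  1 <= cheb_norm2 (siems4_a g) c.
Proof.
  intros Hg Hc.
  assert (Hcert : 0 <= bernstein (map (fun ps => horner ps (g - 6/5)) sigmaF_certificate) c).
  { apply bernstein_horner_nonneg; [unfold sigmaF_certificate; nonneg_coefficients | lra | exact Hc]. }
  assert (Hid := siems4_a_norm2_sub1 g c). nra.
Qed.

Lemma siems4_ca_norm2_le (g c : R) : 6/5 <= g -> -1 <= c <= 1 ->
  16 * (6*g^3 - 3*g + 1)^2 * cheb_norm2 (siems4_c g) c <=
  9 * (8*g^3 + 12*g^2 - 6*g + 1)^2 * cheb_norm2 (siems4_a g) c.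
Proof.
  intros Hg Hc.
  assert (Hcert : 0 <= bernstein (map (fun ps => horner ps (g - 6/5)) sigmaE_certificate) c).
  { apply bernstein_horner_nonneg; [unfold sigmaE_certificate; nonneg_coefficients | lra | exact Hc]. }
  assert (Hid : 9 * (8*g^3 + 12*g^2 - 6*g + 1)^2 * cheb_norm2 (siems4_a g) c
                - 16 * (6*g^3 - 3*g + 1)^2 * cheb_norm2 (siems4_c g) c =
                (1 + c) * bernstein (map (fun ps => horner ps (g - 6/5)) sigmaE_certificate) c).
  { unfold sigmaE_certificate. expand_siems4. field. }
  nra.
Qed.

Lemma siems4_ba_dot_ge (g c : R) : 6/5 <= g -> -1 <= c <= 1 ->
  3 * (2*g - 1)^3 * cheb_norm2 (siems4_a g) c <=
  4 * (6*g^3 - 3*g + 1) * cheb_dot (siems4_b g) (siems4_a g) c.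
Proof.
  intros Hg Hc.
  assert (Hcert : 0 <= bernstein (map (fun ps => horner ps (g - 6/5)) lambdaI_certificate) c).
  { apply bernstein_horner_nonneg; [unfold lambdaI_certificate; nonneg_coefficients | lra | exact Hc]. }
  assert (Hid : 4 * (6*g^3 - 3*g + 1) * cheb_dot (siems4_b g) (siems4_a g) c
                - 3 * (2*g - 1)^3 * cheb_norm2 (siems4_a g) c =
                (1 + c) * bernstein (map (fun ps => horner ps (g - 6/5)) lambdaI_certificate) c).
  { unfold lambdaI_certificate. expand_siems4. field. }
  nra.
Qed.

Lemma siems4_a_at_m1 (g : R) : cheb_re (siems4_a g) 0 (-1) = 4/3 * (6*g^3 - 3*g + 1).
Proof. unfold siems4_a. cbn [cheb_re chebyshev fst]. field. Qed.

Lemma siems4_b_at_m1 (g : R) : cheb_re (siems4_b g) 0 (-1) = (2*g - 1)^3.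
Proof. unfold siems4_b. cbn [cheb_re chebyshev fst]. ring. Qed.

Lemma siems4_c_at_m1 (g : R) : cheb_re (siems4_c g) 0 (-1) = 8*g^3 + 12*g^2 - 6*g + 1.
Proof. unfold siems4_c. cbn [cheb_re chebyshev fst]. ring. Qed.

Lemma siems4_a_nonvanishing (g : R) : 6/5 <= g -> a_nonvanishing (siems4_a g).
Proof.
  intros Hg t _. apply trig_neq0.
  assert (H1 := siems4_a_norm2_ge1 g (cos t) Hg (COS_bound t)). lra.
Qed.

Lemma siems4_sigmaF (g : R) : 6/5 <= g -> sigmaF_is (siems4_a g) 1.
Proof.
  intros Hg. split; [now apply siems4_a_nonvanishing|].
  apply is_max_on_period_of_cos with (P := fun c => / sqrt (cheb_norm2 (siems4_a g) c)) (t0 := 0).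
  - intros t Ht. rewrite Cmod_inv, Cmod_trig by now apply siems4_a_nonvanishing. reflexivity.
  - exact in_period_0.
  - assert (H1 := siems4_a_norm2_sub1 g 1).
    rewrite cos_0. replace (cheb_norm2 (siems4_a g) 1) with 1 by lra.
    rewrite sqrt_1. apply Rinv_1.
  - intros c Hc. assert (H1 := siems4_a_norm2_ge1 g c Hg Hc).
    rewrite <- Rinv_1. apply Rinv_le_contravar; [lra|].
    rewrite <- sqrt_1. apply sqrt_le_1_alt. exact H1.
Qed.

Lemma siems4_sigmaE (g : R) : 6/5 <= g ->
  sigmaE_is (siems4_a g) (siems4_c g)
    (3 * (8*g^3 + 12*g^2 - 6*g + 1) / (4 * (6*g^3 - 3*g + 1))).
Proof.
  intros Hg. set (N := 8*g^3 + 12*g^2 - 6*g + 1). set (D := 6*g^3 - 3*g + 1).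
  assert (HN : 0 < N) by (unfold N; nra). assert (HD : 0 < D) by (unfold D; nra).
  split; [now apply siems4_a_nonvanishing|].
  apply is_max_on_period_of_cos
    with (P := fun c => sqrt (cheb_norm2 (siems4_c g) c / cheb_norm2 (siems4_a g) c)) (t0 := PI).
  - intros t Ht. rewrite Cmod_div, !Cmod_trig by now apply siems4_a_nonvanishing.
    rewrite sqrt_div_alt; [reflexivity|].
    assert (H1 := siems4_a_norm2_ge1 g (cos t) Hg (COS_bound t)). lra.
  - exact in_period_PI.
  - rewrite cos_PI, !cheb_norm2_m1, siems4_a_at_m1, siems4_c_at_m1. fold N D.
    rewrite <- sqrt_pow2 by (apply Rlt_le, Rdiv_lt_0_compat; lra).
    f_equal. field. lra.
  - intros c Hc. assert (H1 := siems4_a_norm2_ge1 g c Hg Hc).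
    rewrite <- (sqrt_pow2 (3 * N / (4 * D))) by (apply Rlt_le, Rdiv_lt_0_compat; lra).
    apply sqrt_le_1_alt.
    replace ((3 * N / (4 * D)) ^ 2) with (9 * N ^ 2 / (16 * D ^ 2)) by (field; lra).
    apply Rdiv_le_div_cross; [lra | nra |].
    assert (H2 := siems4_ca_norm2_le g c Hg Hc). fold N D in H2. lra.
Qed.

Lemma siems4_lambdaI (g : R) : 6/5 <= g ->
  lambdaI_is (siems4_a g) (siems4_b g) (3 * (2*g - 1)^3 / (4 * (6*g^3 - 3*g + 1))).
Proof.
  intros Hg. set (K := (2*g - 1)^3). set (D := 6*g^3 - 3*g + 1).
  assert (HD : 0 < D) by (unfold D; nra).
  split; [now apply siems4_a_nonvanishing|].
  apply is_min_on_period_of_cos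
    with (P := fun c => cheb_dot (siems4_b g) (siems4_a g) c / cheb_norm2 (siems4_a g) c) (t0 := PI).
  - intros t _. apply Re_div_trig.
    assert (H1 := siems4_a_norm2_ge1 g (cos t) Hg (COS_bound t)). lra.
  - exact in_period_PI.
  - rewrite cos_PI, cheb_dot_m1, cheb_norm2_m1, siems4_a_at_m1, siems4_b_at_m1. fold K D.
    field. lra.
  - intros c Hc. assert (H1 := siems4_a_norm2_ge1 g c Hg Hc).
    apply Rdiv_le_div_cross; [lra | lra |].
    assert (H2 := siems4_ba_dot_ge g c Hg Hc). fold K D in H2. lra.
Qed.

Theorem mainTheorem11 (g : R) (hg : 6/5 <= g) :
  let sE := 3 * (8*g^3 + 12*g^2 - 6*g + 1) / (4 * (6*g^3 - 3*g + 1)) in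
  let lI := 3 * (2*g - 1)^3 / (4 * (6*g^3 - 3*g + 1)) in
  sigmaF_is (siems4_a g) 1 /\
  sigmaE_is (siems4_a g) (siems4_c g) sE /\
  lambdaI_is (siems4_a g) (siems4_b g) lI /\
  lI / sE = (2*g - 1)^3 / (8*g^3 + 12*g^2 - 6*g + 1).
Proof.
  intros sE lI.
  split; [|split; [|split]].
  - exact (siems4_sigmaF g hg).
  - exact (siems4_sigmaE g hg).
  - exact (siems4_lambdaI g hg).
  - unfold sE, lI. field. split; nra.
Qed.
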